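(* Let $p$ be a prime, $s\geq 2$, and let $t_1\geq 1,t_2,\dots,t_s$ be nonnegative integers with $t_s\geq 1$. Let $\mathcal{H}_s=\mathcal{H}^{t_1,\dots,t_s}$ (a $\mathbb{Z}_{p^s}$-additive code) and $\mathcal{H}_{s+1}=\mathcal{H}^{1,t_1-1,t_2,\dots,t_{s-1},t_s-1}$ (a $\mathbb{Z}_{p^{s+1}}$-additive code). Then $H_s=\Phi_s(\mathcal{H}_s)$ is permutation equivalent to $H_{s+1}=\Phi_{s+1}(\mathcal{H}_{s+1})$, i.e. there is a coordinate permutation $\pi$ with $H_{s+1}=\pi(H_s)$.
   Context: For $r\geq 1$ and $u\in\mathbb{Z}_{p^r}$ with $p$-ary expansion $u=\sum_{i=0}^{r-1}u_ip^i$, the Gray map $\phi_r:\mathbb{Z}_{p^r}\to\mathbb{Z}_p^{p^{r-1}}$ is $\phi_r(u)=(u_{r-1},\dots,u_{r-1})+(u_0,\dots,u_{r-2})Y_{r-1}$, where $Y_1=(0\ 1\ \cdots\ p-1)$ and $Y_k$ is the $k\times p^k$ matrix with first $k-1$ rows $(Y_{k-1}\ \cdots\ Y_{k-1})$ ($p$ copies) and last row $(0,\dots,0,1,\dots,1,\dots,p-1,\dots,p-1)$ (constant blocks of length $p^{k-1}$); $\phi_1$ is the identity; $\Phi_r$ applies $\phi_r$ coordinatewise and concatenates. For a ring $\mathbb{Z}_{p^r}$ and $1\le i\le r$ let $T_i=\{jp^{i-1}:0\le j\le p^{r-i+1}-1\}$. For nonnegative integers $a_1\ge 1,a_2,\dots,a_r$,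 $A^{a_1,\dots,a_r}$ is the matrix over $\mathbb{Z}_{p^r}$ whose columns are all $\mathbf{z}^T$ with $\mathbf{z}\in\{1\}\times T_1^{a_1-1}\times T_2^{a_2}\times\cdots\times T_r^{a_r}$, and $\mathcal{H}^{a_1,\dots,a_r}\subseteq\mathbb{Z}_{p^r}^n$ is the subgroup generated by its rows. *)

(* Elements of Z_{p^r} and Z_p are represented by their
   canonical representatives in nat (in [0, p^r) resp. [0, p)); vectors are
   seq nat; codes are predicates on seq nat. *)
From mathcomp Require Import all_boot all_order.
From mathcomp Require Import perm.
Set Implicit Arguments. Unset Strict Implicit. Unset Printing Implicit Defensive.

Section Defs.
Variable p : nat.

Definition digit (u i : nat) : nat := (u %/ p ^ i) %% p.

(* Yrec k = Y_{k+1}, as a list of rows, defined by the recursion of the paper: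
   Y_1 = (0 1 ... p-1);  Y_{k+1} = [ (Y_k ... Y_k) (p copies) ;
                                    (0..0 1..1 ... p-1..p-1) blocks of length p^k ] *)
Fixpoint Yrec (k : nat) : seq (seq nat) :=
  match k with
  | 0 => [:: iota 0 p]
  | k'.+1 => [seq flatten (nseq p row) | row <- Yrec k'] ++
             [:: flatten [seq nseq (p ^ k'.+1) j | j <- iota 0 p]]
  end.

Definition Ymat (k : nat) : seq (seq nat) := Yrec k.-1.

(* phi_r(u) = (u_{r-1},...,u_{r-1}) + (u_0,...,u_{r-2}) Y_{r-1}  over Z_p;
   phi_1 = identity *)
Definition phi (r u : nat) : seq nat :=
  if r <= 1 then [:: u] else
  [seq (digit u r.-1 +
        \sum_(i < r.-1) digit u i * nth 0 (nth [::] (Ymat r.-1) i) j) %% p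
  | j <- iota 0 (p ^ r.-1)].

Definition Phi (r : nat) (w : seq nat) : seq nat := flatten (map (phi r) w).

Definition Tset (r i : nat) : seq nat := [seq j * p ^ i.-1 | j <- iota 0 (p ^ (r - i).+1)].

(* the list of factors {1} x T_1^{a_1-1} x T_2^{a_2} x ... x T_r^{a_r},
   where r = size a *)
Definition factors (a : seq nat) : seq (seq nat) :=
  let r := size a in
  [:: [:: 1]] ++ nseq (head 0 a).-1 (Tset r 1) ++
  flatten [seq nseq (nth 0 a i.-1) (Tset r i) | i <- iota 2 r.-1].

Definition cprod (F : seq (seq nat)) : seq (seq nat) :=
  foldr (fun S acc => [seq x :: v | x <- S, v <- acc]) [:: [::]] F.

(* the columns z^T of A^{a_1,...,a_r} (each column as the list of its entries) *)
Definition Acols (a : seq nat) : seq (seq nat) := cprod (factors a).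

(* the codeword  sum_k c_k (row k of A)  in Z_{p^r}^n, r = size a *)
Definition Hword (a : seq nat) (c : seq nat) : seq nat :=
  [seq (sumn [seq x.1 * x.2 | x <- zip c z]) %% p ^ (size a) | z <- Acols a].

(* H^{a_1,...,a_r}: the subgroup of Z_{p^r}^n generated by the rows of A,
   i.e. the set of all integer (equivalently nonnegative) combinations of them *)
Definition inH (a : seq nat) (w : seq nat) : Prop := exists c : seq nat, w = Hword a c.

Definition inPhiH (a : seq nat) (w : seq nat) : Prop :=
  exists v, inH a v /\ w = Phi (size a) v.

Definition permute (N : nat) (sigma : {perm 'I_N}) (v : seq nat) : seq nat :=
  [seq nth 0 v (sigma i) | i <- enum 'I_N].

End Defs.

From mathcomp Require Import all_boot all_order perm.
Set Implicit Arguments. Unset Strict Implicit. Unset Printing Implicit Defensive.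

(* Write j < p^s in base p as (j_0, ..., j_(s-1)).  Coordinate j of phi_(s+1)(u)
   is u_s + \sum_(i < s) u_i j_i mod p, so for u = a + p V with a < p it equals
   coordinate (j_1, ..., j_(s-1)) of phi_s(V + a j_0 p^(s-1)).  The columns of
   A^t' are the 1 :: p z and those of A^t the 1 :: z ++ [k p^(s-1)], k < p, for z
   ranging over one and the same product of T_i's.  Hence transposing every block
   of p x p^(s-1) positions maps the image of the codeword of H_(s+1) whose
   all-one row has coefficient a + p b onto the image of the codeword of H_s with
   the same other coefficients, coefficient b for the all-one row and a for the
   last row.  Every codeword of H_s arises so: the last row of A^t is divisible by
   p^(s-1), so only its coefficient mod p matters. *)

Section FlattenUniform.
Variables (T : eqType) (x0 : T) (k : nat).

Lemma size_flatten_uniform (ss : seq (seq T)) :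
  {in ss, forall s, size s = k} -> size (flatten ss) = size ss * k.
Proof.
elim: ss => [|s ss IHss] //= sizeE.
by rewrite size_cat IHss ?sizeE ?mem_head // => s' ss_s'; rewrite sizeE // in_cons ss_s' orbT.
Qed.

Lemma nth_flatten_uniform (ss : seq (seq T)) i :
  {in ss, forall s, size s = k} -> i < size ss * k ->
  nth x0 (flatten ss) i = nth x0 (nth [::] ss (i %/ k)) (i %% k).
Proof.
elim: ss i => [|s ss IHss] i //= sizeE lt_i.
have /andP[_ k_gt0] : (0 < (size ss).+1) && (0 < k).
  by rewrite -muln_gt0 (leq_ltn_trans _ lt_i).
rewrite nth_cat sizeE ?mem_head //; case: ltnP => [lt_ik | le_ki].
  by rewrite divn_small // modn_small.
have -> : i = k + (i - k) by rewrite subnKC.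
rewrite addKn IHss; first by rewrite modnDl divnDl ?dvdnn // divnn k_gt0.
- by move=> s' ss_s'; rewrite sizeE // in_cons ss_s' orbT.
- by rewrite -(ltn_add2l k) subnKC // -mulSn.
Qed.

End FlattenUniform.

Section Digits.
Variable p : nat.
Hypothesis p_gt0 : 0 < p.

Lemma digit0 x : digit p x 0 = x %% p.
Proof. by rewrite /digit expn0 divn1. Qed.

Lemma digitS x i : digit p x i.+1 = digit p (x %/ p) i.
Proof. by rewrite /digit expnS divnMA. Qed.

Lemma digit_modX x m i : i < m -> digit p (x %% p ^ m) i = digit p x i.
Proof.
move=> lt_im; rewrite /digit -(subnKC (ltnW lt_im)) expnD.
rewrite divn_modl ?dvdn_mulr // mulKn ?expn_gt0 ?p_gt0 //.
by rewrite modn_dvdm // dvdn_exp // subn_gt0.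
Qed.

Lemma digit_addXl x y m i : i < m -> digit p (x + y * p ^ m) i = digit p x i.
Proof.
move=> lt_im; rewrite /digit -(subnKC lt_im) expnD expnSr.
rewrite -mulnA mulnCA [p ^ i * _]mulnC divnDMl ?expn_gt0 ?p_gt0 //.
by rewrite -modnDm mulnCA modnMr addn0 modn_mod.
Qed.

Lemma digit_addX x y m : digit p (x + y * p ^ m) m = (x %/ p ^ m + y) %% p.
Proof. by rewrite /digit divnDMl ?expn_gt0 ?p_gt0. Qed.

End Digits.

Lemma ltn_mixed_radix a b c x : a < b -> x < c -> a * c + x < b * c.
Proof.
move=> lt_ab lt_xc; apply: (@leq_trans (a.+1 * c)); first by rewrite mulSnr ltn_add2l.
by rewrite leq_mul2r lt_ab orbT.
Qed.

(* Reading [i < m * n] as [b * m + a] with [a < m], this is [a * n + b]: the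
   transposition of an [n x m] array stored row by row. *)
Definition transpose_index m n i := i %% m * n + i %/ m.

Definition block_transpose m n i :=
  i %/ (m * n) * (m * n) + transpose_index m n (i %% (m * n)).

Lemma transpose_index_lt m n i : i < m * n -> transpose_index m n i < m * n.
Proof.
move=> lt_imn; have /andP[m_gt0 _] : (0 < m) && (0 < n).
  by rewrite -muln_gt0 (leq_ltn_trans _ lt_imn).
by rewrite ltn_mixed_radix ?ltn_mod // ltn_divLR // mulnC.
Qed.

Lemma transpose_indexK m n i : i < m * n ->
  transpose_index n m (transpose_index m n i) = i.
Proof.
move=> lt_imn; have /andP[m_gt0 n_gt0] : (0 < m) && (0 < n).
  by rewrite -muln_gt0 (leq_ltn_trans _ lt_imn).
have lt_b : i %/ m < n by rewrite ltn_divLR // mulnC.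
rewrite /transpose_index modnMDl divnMDl // (modn_small lt_b) (divn_small lt_b).
by rewrite addn0 -divn_eq.
Qed.

Lemma block_transpose_lt m n K i :
  i < K * (m * n) -> block_transpose m n i < K * (m * n).
Proof.
move=> lt_i; have /andP[_ mn_gt0] : (0 < K) && (0 < m * n).
  by rewrite -muln_gt0 (leq_ltn_trans _ lt_i).
rewrite ltn_mixed_radix ?ltn_divLR //.
exact/transpose_index_lt/ltn_pmod.
Qed.

Lemma block_transposeK m n i : 0 < m * n -> block_transpose n m (block_transpose m n i) = i.
Proof.
move=> mn_gt0; have lt_t := transpose_index_lt (ltn_pmod i mn_gt0).
rewrite /block_transpose [n * m]mulnC divnMDl // modnMDl (divn_small lt_t) (modn_small lt_t).
by rewrite addn0 transpose_indexK ?ltn_pmod // -divn_eq.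
Qed.

Lemma block_transpose_perm m n N : 0 < m * n -> m * n %| N ->
  exists sigma : {perm 'I_N}, forall i, val (sigma i) = block_transpose m n i.
Proof.
move=> mn_gt0 dvd_mn_N.
have lt_t (i : 'I_N) : block_transpose m n i < N.
  by have := @block_transpose_lt m n (N %/ (m * n)) i; rewrite divnK //; apply.
pose f i := Ordinal (lt_t i).
have inj_f : injective f.
  move=> i j /(congr1 (block_transpose n m \o val)).
  by rewrite /= !block_transposeK // => /val_inj.
by exists (perm inj_f) => i; rewrite permE.
Qed.

Lemma permute_block_transpose m n N (sigma : {perm 'I_N}) v :
  (forall i, val (sigma i) = block_transpose m n i) ->
  permute sigma v = [seq nth 0 v (block_transpose m n i) | i <- iota 0 N].
Proof.
move=> sigmaE; rewrite /permute -val_enum_ord -map_comp.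
by apply: eq_map => i /=; rewrite sigmaE.
Qed.

Lemma flatten_block_transpose (S T : eqType) (x0 : T) m n (Z : seq S) (f g : S -> seq T) :
  {in Z, forall z, size (f z) = m * n} -> {in Z, forall z, size (g z) = m * n} ->
  (forall z j, z \in Z -> j < m * n ->
     nth x0 (f z) j = nth x0 (g z) (transpose_index m n j)) ->
  flatten (map f Z) =
  [seq nth x0 (flatten (map g Z)) (block_transpose m n i) | i <- iota 0 (size Z * (m * n))].
Proof.
move=> size_f size_g fgE.
have uniform_f : {in map f Z, forall s, size s = m * n}.
  by move=> _ /mapP[z Zz ->]; apply: size_f.
have uniform_g : {in map g Z, forall s, size s = m * n}.
  by move=> _ /mapP[z Zz ->]; apply: size_g.
apply: (@eq_from_nth _ x0) => [|i].
  by rewrite size_map size_iota (size_flatten_uniform uniform_f) size_map.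
rewrite (size_flatten_uniform uniform_f) size_map => lt_i.
have /andP[Z_gt0 mn_gt0] : (0 < size Z) && (0 < m * n).
  by rewrite -muln_gt0 (leq_ltn_trans _ lt_i).
have [z0 _] : exists z0 : S, true by move: Z_gt0; case: (Z) => // z0; exists z0.
have lt_q : i %/ (m * n) < size Z by rewrite ltn_divLR.
have lt_t := transpose_index_lt (ltn_pmod i mn_gt0).
rewrite (nth_map 0) ?size_iota // nth_iota // add0n.
rewrite (nth_flatten_uniform _ uniform_f) ?size_map //.
rewrite (nth_flatten_uniform _ uniform_g) ?size_map ?block_transpose_lt //.
rewrite /block_transpose divnMDl // modnMDl (divn_small lt_t) (modn_small lt_t) addn0.
by rewrite !(nth_map z0) // fgE ?mem_nth ?ltn_pmod.
Qed.

Section GrayMap.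
Variable p : nat.
Hypothesis p_gt0 : 0 < p.

Lemma size_Yrec k : size (Yrec p k) = k.+1.
Proof. by elim: k => //= k IHk; rewrite size_cat size_map IHk addn1. Qed.

Lemma size_Yrec_row k row : row \in Yrec p k -> size row = p ^ k.+1.
Proof.
elim: k row => [|k IHk] row /=; first by rewrite inE => /eqP ->; rewrite size_iota.
rewrite mem_cat inE => /orP[/mapP[row' /IHk size_row' ->] | /eqP ->].
  rewrite (size_flatten_uniform (k := p ^ k.+1)) ?size_nseq -?expnS //.
  by move=> s /nseqP[->].
rewrite (size_flatten_uniform (k := p ^ k.+1)); last first.
  by move=> s /mapP[j _ ->]; rewrite size_nseq.
by rewrite size_map size_iota -expnS.
Qed.

Lemma nth_Yrec k i j : i <= k -> j < p ^ k.+1 ->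
  nth 0 (nth [::] (Yrec p k) i) j = digit p j i.
Proof.
elim: k i j => [|k IHk] i j.
  by rewrite leqn0 => /eqP-> lt_jp; rewrite /= nth_iota // digit0 modn_small.
move=> le_ik lt_jp; have Pk_gt0 : 0 < p ^ k.+1 by rewrite expn_gt0 p_gt0.
have lt_jPk : j %/ p ^ k.+1 < p by rewrite ltn_divLR // -expnSr.
rewrite /= nth_cat size_map size_Yrec; case: ltnP => [lt_ik | le_ki].
  rewrite (nth_map [::]) ?size_Yrec // (nth_flatten_uniform _ (k := p ^ k.+1)); last first.
  - by rewrite size_nseq -expnS.
  - by move=> s /nseqP[-> _]; apply: size_Yrec_row; rewrite mem_nth ?size_Yrec.
  by rewrite nth_nseq lt_jPk IHk ?ltn_pmod // digit_modX.
have -> : i = k.+1 by apply/eqP; rewrite eqn_leq le_ik.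
rewrite subnn /= (nth_flatten_uniform _ (k := p ^ k.+1)); last first.
- by rewrite size_map size_iota -expnS.
- by move=> s /mapP[j' _ ->]; rewrite size_nseq.
rewrite (nth_map 0) ?size_iota // nth_nseq ltn_pmod // nth_iota //.
by rewrite /digit modn_small.
Qed.

Lemma size_phi r u : size (phi p r.+2 u) = p ^ r.+1.
Proof. by rewrite /phi size_map size_iota. Qed.

Lemma nth_phi r u j : j < p ^ r.+1 ->
  nth 0 (phi p r.+2 u) j =
  (digit p u r.+1 + \sum_(i < r.+1) digit p u i * digit p j i) %% p.
Proof.
move=> lt_jp; rewrite /phi (nth_map 0) ?size_iota // nth_iota //.
by congr ((_ + _) %% p); apply: eq_bigr => i _; rewrite nth_Yrec // -ltnS.
Qed.

Lemma nth_phiS r a0 V j : a0 < p -> j < p ^ r.+2 ->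
  nth 0 (phi p r.+3 ((a0 + p * V) %% p ^ r.+3)) j =
  nth 0 (phi p r.+2 ((V + a0 * (j %% p) * p ^ r.+1) %% p ^ r.+2)) (j %/ p).
Proof.
move=> lt_a0p lt_jp.
rewrite nth_phi // nth_phi; last by rewrite ltn_divLR // -expnSr.
set u := (a0 + p * V) %% p ^ r.+3; set U := (V + _ * p ^ r.+1) %% p ^ r.+2.
have u_digitS i : i < r.+2 -> digit p u i.+1 = digit p V i.
  move=> lt_ir; rewrite digit_modX // digitS.
  by rewrite addnC mulnC divnMDl // divn_small // addn0.
have u_digit0 : digit p u 0 = a0.
  by rewrite digit0 modn_dvdm ?dvdn_exp // addnC mulnC modnMDl modn_small.
have U_digit i : i < r.+1 -> digit p U i = digit p V i.
  by move=> lt_ir; rewrite digit_modX ?digit_addXl // ltnW.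
have U_digit_top : digit p U r.+1 = (V %/ p ^ r.+1 + a0 * (j %% p)) %% p.
  by rewrite digit_modX // digit_addX.
rewrite big_ord_recl u_digitS // u_digit0 U_digit_top digit0.
pose W (i : 'I_r.+1) := digit p V i * digit p (j %/ p) i.
rewrite (eq_bigr W) => [|i _]; last first.
  by rewrite lift0 u_digitS; [rewrite digitS | exact: leqW].
rewrite [in RHS](eq_bigr W) => [|i _]; last by rewrite U_digit.
by rewrite /digit !modnDml addnA.
Qed.

Lemma Phi_flatten r ws : Phi p r (flatten ws) = flatten (map (Phi p r) ws).
Proof. by elim: ws => //= w ws IHws; rewrite -IHws /Phi map_cat flatten_cat. Qed.

Lemma nth_phiS_transpose r a0 V j : a0 < p -> j < p * p ^ r.+1 ->
  nth 0 (phi p r.+3 ((a0 + p * V) %% p ^ r.+3)) j =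
  nth 0 (flatten [seq phi p r.+2 ((V + a0 * (k * p ^ r.+1)) %% p ^ r.+2) | k <- iota 0 p])
        (transpose_index p (p ^ r.+1) j).
Proof.
move=> lt_a0p lt_j; have Pr_gt0 : 0 < p ^ r.+1 by rewrite expn_gt0 p_gt0.
have lt_jp : j %/ p < p ^ r.+1 by rewrite ltn_divLR // mulnC.
rewrite nth_phiS // (nth_flatten_uniform _ (k := p ^ r.+1)); last first.
- by rewrite size_map size_iota transpose_index_lt.
- by move=> _ /mapP[k _ ->]; rewrite size_phi.
rewrite /transpose_index divnMDl // modnMDl (divn_small lt_jp) (modn_small lt_jp) addn0.
by rewrite [nth [::] _ _](nth_map 0) ?size_iota ?ltn_pmod // nth_iota ?ltn_pmod // mulnA.
Qed.

Lemma Phi_shuffle (S : eqType) r a0 (Z : seq S) (f : S -> nat) : a0 < p ->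
  Phi p r.+3 [seq (a0 + p * f z) %% p ^ r.+3 | z <- Z] =
  [seq nth 0 (Phi p r.+2 [seq (f z + a0 * (k * p ^ r.+1)) %% p ^ r.+2 | z <- Z, k <- iota 0 p])
         (block_transpose p (p ^ r.+1) i) | i <- iota 0 (size Z * (p * p ^ r.+1))].
Proof.
move=> lt_a0p; rewrite Phi_flatten /Phi -!map_comp.
apply: flatten_block_transpose => [z _ | z _ | z j _ lt_j] /=.
- by rewrite size_phi expnS.
- rewrite (size_flatten_uniform (k := p ^ r.+1)) ?size_map ?size_iota //.
  by move=> _ /mapP[k _ ->]; rewrite size_phi.
- by rewrite nth_phiS_transpose // -map_comp.
Qed.

End GrayMap.

Definition dot (c z : seq nat) := sumn [seq x.1 * x.2 | x <- zip c z].

Lemma HwordE p a c : Hword p a c = [seq dot c z %% p ^ size a | z <- Acols p a].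
Proof. by []. Qed.

Lemma dotE c z : dot c z = \sum_(i < size z) nth 0 c i * nth 0 z i.
Proof.
rewrite /dot; elim: z c => [|x z IHz] c; first by rewrite big_ord0; case: c.
rewrite big_ord_recl; case: c => [|y c] /=; last by rewrite IHz.
by rewrite mul0n big1 // => i _; rewrite nth_nil.
Qed.

Lemma eq_dot c c' z :
  (forall i, i < size z -> nth 0 c i = nth 0 c' i) -> dot c z = dot c' z.
Proof. by move=> cc'E; rewrite !dotE; apply: eq_bigr => i _; rewrite cc'E. Qed.

Lemma dot_cons c x z : dot c (x :: z) = nth 0 c 0 * x + dot (behead c) z.
Proof.
rewrite !dotE big_ord_recl; congr (_ + _).
by apply: eq_bigr => i _; rewrite lift0 nth_behead.
Qed.

Lemma dot_rcons c z x : dot c (rcons z x) = dot c z + nth 0 c (size z) * x.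
Proof.
rewrite !dotE size_rcons big_ord_recr /= nth_rcons ltnn eqxx; congr (_ + _).
by apply: eq_bigr => i _; rewrite nth_rcons ltn_ord.
Qed.

Lemma dot_map_muln p c z : dot c (map (muln p) z) = p * dot c z.
Proof.
rewrite !dotE size_map big_distrr; apply: eq_bigr => i _.
by rewrite (nth_map 0) // mulnCA.
Qed.

Section Factors.
Variable p : nat.

Lemma Tset_muln r i : 0 < i -> map (muln p) (Tset p r i) = Tset p r.+1 i.+1.
Proof.
case: i => // i _; rewrite /Tset -map_comp subSS.
by apply: eq_map => j /=; rewrite expnS mulnCA.
Qed.

Lemma Tset_top r : Tset p r.+1 r.+1 = [seq k * p ^ r | k <- iota 0 p].
Proof. by rewrite /Tset subnn expn1. Qed.

Fixpoint Tfactors r i e : seq (seq nat) :=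
  if e is m :: e' then nseq m (Tset p r i) ++ Tfactors r i.+1 e' else [::].

Lemma Tfactors_iota r i e :
  Tfactors r i e = flatten [seq nseq (nth 0 e j) (Tset p r (i + j)) | j <- iota 0 (size e)].
Proof.
elim: e i => [|m e IHe] i //=; rewrite addn0 IHe -[1]/(1 + 0) iotaDl -map_comp.
by congr (_ ++ flatten _); apply: eq_map => j /=; rewrite addSnnS.
Qed.

Lemma factorsE a : factors p a = [:: 1] :: Tfactors (size a) 1 ((head 0 a).-1 :: behead a).
Proof.
case: a => [|x b] //; rewrite /factors /= Tfactors_iota -[2]/(2 + 0) iotaDl -map_comp.
by congr (_ :: _ ++ flatten _); apply: eq_map => j.
Qed.

Lemma Tfactors_rcons r i e m :
  Tfactors r i (rcons e m) = Tfactors r i e ++ nseq m (Tset p r (i + size e)).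
Proof. by elim: e i => [|m' e IHe] i /=; rewrite ?cats0 ?addn0 // IHe catA addSnnS. Qed.

Lemma Tfactors_cons0 r i e : Tfactors r i (0 :: e) = Tfactors r i.+1 e.
Proof. by []. Qed.

Lemma Tfactors_muln r i e :
  0 < i -> map (map (muln p)) (Tfactors r i e) = Tfactors r.+1 i.+1 e.
Proof.
elim: e i => [|m e IHe] i i_gt0 //=.
by rewrite map_cat map_nseq Tset_muln // IHe.
Qed.

End Factors.

Lemma cprod_cons S F : cprod (S :: F) = [seq x :: v | x <- S, v <- cprod F].
Proof. by []. Qed.

Lemma cprod_cat A B : cprod (A ++ B) = [seq z ++ y | z <- cprod A, y <- cprod B].
Proof.
elim: A => [|S A IHA] /=; first by rewrite cats0 map_id.
rewrite IHA; elim: S => [|x S IHS] //=.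
by rewrite allpairs_cat IHS map_allpairs allpairs_mapl.
Qed.

Lemma cprod_rcons F S : cprod (rcons F S) = [seq rcons z x | z <- cprod F, x <- S].
Proof.
rewrite -cats1 cprod_cat /= flatten_map1 allpairs_mapr.
by apply: eq_allpairs => z x; rewrite cats1.
Qed.

Lemma cprod_map (g : nat -> nat) F : cprod (map (map g) F) = map (map g) (cprod F).
Proof. by elim: F => [|S F IHF] //=; rewrite IHF allpairs_mapl allpairs_mapr map_allpairs. Qed.

Lemma size_mem_cprod F z : z \in cprod F -> size z = size F.
Proof.
elim: F z => [|S F IHF] z /=; first by rewrite inE => /eqP ->.
by case/allpairsP => [[x z'] [_ /IHF size_z' ->]] /=; rewrite size_z'.
Qed.

Lemma modnDMml x e k n d : x + e %% n * (k * d) = x + e * (k * d) %[mod n * d].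
Proof. by rewrite mulnCA muln_modl -modnDmr modnMmr modnDmr mulnCA. Qed.

Section Shuffle.
Variables (p t1 ts : nat) (mid : seq nat).
Hypotheses (p_gt0 : 0 < p) (ts_gt0 : 0 < ts).

Local Notation r := (size mid).
Local Notation t := (t1 :: rcons mid ts).
Local Notation t' := (1 :: t1.-1 :: rcons mid ts.-1).
Local Notation F := (Tfactors p r.+2 1 (rcons (t1.-1 :: mid) ts.-1)).
Local Notation Z := (cprod F).

Lemma size_t : size t = r.+2. Proof. by rewrite /= size_rcons. Qed.
Lemma size_t' : size t' = r.+3. Proof. by rewrite /= size_rcons. Qed.

Lemma Acols_t : Acols p t = [seq 1 :: rcons z x | z <- Z, x <- Tset p r.+2 r.+2].
Proof.
have nseq_ts (T : seq nat) : nseq ts T = rcons (nseq ts.-1 T) T.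
  by rewrite -{1}(prednK ts_gt0); elim: ts.-1 => //= n ->.
rewrite /Acols factorsE size_t -[(head 0 _).-1 :: _]/(rcons (t1.-1 :: mid) ts).
rewrite Tfactors_rcons nseq_ts -rcons_cat -Tfactors_rcons.
by rewrite cprod_cons allpairs1l cprod_rcons map_allpairs.
Qed.

Lemma Acols_t' : Acols p t' = [seq 1 :: map (muln p) z | z <- Z].
Proof.
rewrite /Acols factorsE size_t' -[(head 0 _).-1 :: _]/(0 :: rcons (t1.-1 :: mid) ts.-1).
rewrite Tfactors_cons0 -Tfactors_muln // cprod_cons cprod_map.
by rewrite allpairs1l -map_comp.
Qed.

Lemma size_Acols_t : size (Acols p t) * p ^ (size t).-1 = size Z * (p * p ^ r.+1).
Proof. by rewrite Acols_t size_allpairs Tset_top size_map size_iota size_t mulnA. Qed.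

Lemma Hword_t c :
  Hword p t c =
  [seq (nth 0 c 0 + dot (behead c) z + nth 0 (behead c) (size F) * (k * p ^ r.+1)) %% p ^ r.+2
  | z <- Z, k <- iota 0 p].
Proof.
rewrite HwordE Acols_t Tset_top size_t map_allpairs allpairs_mapr.
congr flatten; apply/eq_in_map => z /size_mem_cprod size_z; apply/eq_map => k /=.
by rewrite dot_cons dot_rcons muln1 addnA size_z.
Qed.

Lemma Hword_t' c :
  Hword p t' c = [seq (nth 0 c 0 + p * dot (behead c) z) %% p ^ r.+3 | z <- Z].
Proof.
rewrite HwordE Acols_t' size_t' -map_comp; apply/eq_map => z /=.
by rewrite dot_cons dot_map_muln muln1.
Qed.

Local Notation shuffled w :=
  [seq nth 0 w (block_transpose p (p ^ r.+1) i)
  | i <- iota 0 (size (Acols p t) * p ^ (size t).-1)].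

Lemma Hword_t'_shuffled c' :
  exists c, Phi p (size t') (Hword p t' c') = shuffled (Phi p (size t) (Hword p t c)).
Proof.
set a := nth 0 c' 0; set d := behead c'.
pose c := a %/ p :: set_nth 0 d (size F) (a %% p); exists c.
have -> : Hword p t' c' = [seq (a %% p + p * (a %/ p + dot d z)) %% p ^ r.+3 | z <- Z].
  rewrite Hword_t'; apply/eq_map => z /=.
  by rewrite mulnDr addnA [a %% p + _]addnC [p * (a %/ p)]mulnC -divn_eq.
have -> : Hword p t c =
    [seq (a %/ p + dot d z + a %% p * (k * p ^ r.+1)) %% p ^ r.+2 | z <- Z, k <- iota 0 p].
  rewrite Hword_t; congr flatten; apply/eq_in_map => z /size_mem_cprod size_z.
  apply/eq_map => k /=; rewrite nth_set_nth /= eqxx (@eq_dot _ d) // => i.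
  by rewrite size_z nth_set_nth /= => /ltn_eqF ->.
by rewrite size_Acols_t size_t size_t' Phi_shuffle ?ltn_mod.
Qed.

Lemma Hword_t_shuffled c :
  exists c', Phi p (size t') (Hword p t' c') = shuffled (Phi p (size t) (Hword p t c)).
Proof.
set c0 := nth 0 c 0; set d := behead c; set e := nth 0 d (size F).
exists (e %% p + p * c0 :: d).
have -> : Hword p t' (e %% p + p * c0 :: d) =
    [seq (e %% p + p * (c0 + dot d z)) %% p ^ r.+3 | z <- Z].
  by rewrite Hword_t'; apply/eq_map => z /=; rewrite mulnDr addnA.
have -> : Hword p t c =
    [seq (c0 + dot d z + e %% p * (k * p ^ r.+1)) %% p ^ r.+2 | z <- Z, k <- iota 0 p].
  rewrite Hword_t -/c0 -/d -/e; congr flatten; apply/eq_map => z; apply/eq_map => k /=.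
  by rewrite [p ^ r.+2]expnS modnDMml.
by rewrite size_Acols_t size_t size_t' Phi_shuffle ?ltn_mod.
Qed.

End Shuffle.

Theorem lemma7 (p t1 ts : nat) (mid : seq nat) :
  prime p -> 1 <= t1 -> 1 <= ts ->
  let t := t1 :: rcons mid ts in
  let t' := 1 :: t1.-1 :: rcons mid ts.-1 in
  let N := size (Acols p t) * p ^ (size t).-1 in
  exists sigma : {perm 'I_N},
    forall w : seq nat,
      inPhiH p t' w <-> exists v, inPhiH p t v /\ w = permute sigma v.
Proof.
move=> /prime_gt0 p_gt0 _ ts_gt0 t t' N.
have [sigma sigmaE] : exists sigma : {perm 'I_N},
    forall i, val (sigma i) = block_transpose p (p ^ (size mid).+1) i.
  apply: block_transpose_perm; first by rewrite muln_gt0 expn_gt0 p_gt0.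
  by rewrite /N size_Acols_t // dvdn_mull.
exists sigma => w; split.
- case=> _ [[c' ->] ->]; have [c shuffledE] := Hword_t'_shuffled t1 mid p_gt0 ts_gt0 c'.
  exists (Phi p (size t) (Hword p t c)); split.
    by exists (Hword p t c); split => //; exists c.
  by rewrite (permute_block_transpose _ sigmaE).
- case=> _ [[_ [[c ->] ->]] ->]; have [c' shuffledE] := Hword_t_shuffled t1 mid p_gt0 ts_gt0 c.
  exists (Hword p t' c'); split; first by exists c'.
  by rewrite (permute_block_transpose _ sigmaE).
Qed.
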